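(* Let $r:s_1\ldots s_n\to\mathsf{Fact}$ be a fact constructor, let $Q$ be a query, and let $\vec x=x_1,\dots,x_n$ be distinct variables with $x_i$ of sort $s_i$ and $\{\vec x\}\cap\mathrm{Var}(Q)=\emptyset$. Then there exists a condition $\varphi^{\vec x\mid r}_Q$ such that for all ground finite multisets of facts $F$ and all ground substitutions $\sigma=\{\vec t/\vec x,\vec a/\vec v\}$ for which $\{\vec a/\vec v\}(Q)$ is closed, the condition $\sigma(\varphi^{\vec x\mid r}_Q)$ is closed, and $\mathrm{Init}_{\sigma(\varphi^{\vec x\mid r}_Q)}(F)\to^!\mathrm{Sat}(\mathsf{true})$ iff there is $F'$ with $\mathrm{Init}_{\{\vec a/\vec v\}(Q)}(F)\to^!\mathrm{Ans}(F'\circ r(\vec t))$, and $\mathrm{Init}_{\sigma(\varphi^{\vec x\mid r}_Q)}(F)\to^!\mathrm{Sat}(\mathsf{false})$ iff there is $F'$ with $r(\vec t)\notin F'$ and $\mathrm{Init}_{\{\vec a/\vec v\}(Q)}(F)\to^!\mathrm{Ans}(F')$. Moreover, if $Q$ is deterministic, then so is $\varphi^{\vec x\mid r}_Q$.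
   Context: Setting. Fix an order-sorted signature $\Sigma$ with sorts $\mathsf{Fact}$, $\mathsf{Bool}$ and a $\Sigma$-algebra of facts $\mathcal{D}$ presented by structural axioms $A$ and confluent terminating equations, providing Boolean connectives and Boolean-valued equality on every sort; every ground $\mathsf{Bool}$ term reduces to $\mathsf{true}$ or $\mathsf{false}$. Multisets of facts: associative commutative $\circ$ with identity $\emptyset$. A terminating and preserving pattern $P$ is $[F_1]_!\circ[F_2]_?$ or $[F_2]_?$ ($F_1,F_2$ non-empty, possibly non-ground, multisets of facts); $P_!,P_?$ are the wrapped multisets ($P_!=\emptyset$ if absent). Conditions: $\mathrm{False}$, $\{B\}$, $\neg\psi$, $\psi_1\vee\psi_2$, $\exists P.\psi$ (binding in $\psi$ the variables of $P$ not bound by the context). Condition-evaluation stacks consist of frames $\mathrm{Res}(B)$, $\mathrm{Not}$, $[\vec a]^{\vec v}_\psi$, $[\vec a]^{\vec v,\downarrow}_\psi$, $[F'\mid\vec a]^{\vec v}_{\exists P.\psi}$ ($\sigma=\{\vec a/\vec v\}$); rules (''$X\mapsto Y$'' meaning $\{F,S\,X\}^c\to\{F,S\,Y\}^c$, $F$ the database): $[\vec a]_{\mathrm{False}}\mapsto\mathrm{Res}(\mathsf{false})$; $[\vec a]_{\{B\}}\mapsto\mathrm{Res}(\sigma(B))$; $[\vec a]_{\neg\psi}\mapsto\mathrm{Not}[\vec a]_\psi$; $\mathrm{Not}\,\mathrm{Res}(B)\mapsto\mathrm{Res}(\neg B)$; $[\vec a]_{\psi_1\vee\psi_2}\mapsto[\vec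 a]^\downarrow_{\psi_1}[\vec a]_{\psi_2}$; $[\vec a]^\downarrow_\psi\mathrm{Res}(\mathsf{true})\mapsto\mathrm{Res}(\mathsf{true})$; $[\vec a]^\downarrow_\psi\mathrm{Res}(\mathsf{false})\mapsto[\vec a]_\psi$; $[\vec a]_{\exists P.\psi}\mapsto[F\mid\vec a]_{\exists P.\psi}$; if $\vec w$ lists the variables of $P$ not in $\vec v$, $\sigma'=\{\vec a/\vec v,\vec b/\vec w\}$, $F'=F''\circ\sigma'(P_!\circ P_?)$: $[F'\mid\vec a]_{\exists P.\psi}\mapsto[F''\circ\sigma'(P_!)\mid\vec a]_{\exists P.\psi}[\vec a,\vec b]^{\vec v,\vec w}_\psi$; $[F'\mid\vec a]_{\exists P.\psi}\mathrm{Res}(\mathsf{false})\mapsto[F'\mid\vec a]_{\exists P.\psi}$; $[F'\mid\vec a]_{\exists P.\psi}\mathrm{Res}(\mathsf{true})\mapsto\mathrm{Res}(\mathsf{true})$; if no matching exists, $[F'\mid\vec a]_{\exists P.\psi}\mapsto\mathrm{Res}(\mathsf{false})$; finally $\{F,\mathrm{Res}(B)\}^c\to\mathrm{Sat}(B)$. $\mathrm{Init}_\varphi(F):=\{F,[\,]_\varphi\}^c$. Queries: $\emptyset$; facts $f$; $Q_1\oplus Q_2$; $\varphi\Rightarrow Q$; $\mathrm{From}\,P.Q$ ($P$ terminating and preserving, binding like $\exists$). Query system: states $\{F,F',S\}^q$, terminal $\mathrm{Ans}(F')$; with ''$X\mapsto Y$'' meaning $\{F,F',S\,X\}^q\to\{F,F',S\,Y\}^q$: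 $\{F,F',S[\vec a]_f\}^q\to\{F,F'\circ\sigma(f),S\}^q$; $[\vec a]_\emptyset\mapsto$ (nothing); $[\vec a]_{R_1\oplus R_2}\mapsto[\vec a]_{R_2}[\vec a]_{R_1}$; $[\vec a]_{\varphi\Rightarrow R}\mapsto[\vec a\mid[\vec a]^{\vec v}_\varphi]_R$; $[\vec a\mid\mathrm{Res}(\mathsf{false})]_R\mapsto$ (nothing); $[\vec a\mid\mathrm{Res}(\mathsf{true})]_R\mapsto[\vec a]_R$; for each condition rule $\{F,S'\}^c\to\{F,S''\}^c$, $[\vec a\mid S']_R\mapsto[\vec a\mid S'']_R$; $[\vec a]_{\mathrm{From}\,P.R}\mapsto[F\mid\vec a]_{\mathrm{From}\,P.R}$; if $F''=H\circ\sigma'(P_!\circ P_?)$ then $[F''\mid\vec a]_{\mathrm{From}\,P.R}\mapsto[H\circ\sigma'(P_!)\mid\vec a]_{\mathrm{From}\,P.R}[\vec a,\vec b]^{\vec v,\vec w}_R$; if no matching exists, $[F''\mid\vec a]_{\mathrm{From}\,P.R}\mapsto$ (nothing); $\{F,F',\text{empty}\}^q\to\mathrm{Ans}(F')$. $\mathrm{Init}_Q(F):=\{F,\emptyset,[\,]_Q\}^q$. $t\to^!t'$ means $t\to^*t'$ with $t'$ irreducible. $\mathrm{Var}(t)$ is the set of variables of $t$; a condition/query is closed if all its variables are bound by enclosing patterns. A fully reduced fact term $t$ has the unique matching property if for every ground fully reduced fact $t'$ there is at most one substitution $\sigma$ with $\sigma(t)=t'$; a condition or query is deterministic if all its quantification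 patterns (including those inside conditions) consist of a single fact with the unique matching property. *)

From mathcomp Require Import all_boot.
Set Implicit Arguments. Unset Strict Implicit. Unset Printing Implicit Defensive.

(* Each (possibly overloaded) operator instance is a separate symbol. *)
Record sig := Sig {
  srt : eqType;
  sFact : srt;
  sBool : srt;
  leS : rel srt;
  var : eqType;
  vsort : var -> srt;
  opsym : eqType;
  fdom : opsym -> seq srt;
  fcod : opsym -> srt;
  fTrue : opsym; fFalse : opsym; fNot : opsym; fAnd : opsym; fOr : opsym;
  fEq : srt -> opsym
}.

Section Syntax.
Variable S : sig.

Inductive term : Type :=
| TVar of var S
| TApp of opsym S & seq term.

Definition bTrue : term := TApp (fTrue S) [::].
Definition bFalse : term := TApp (fFalse S) [::].

Fixpoint tvars (t : term) : seq (var S) :=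
  match t with
  | TVar x => [:: x]
  | TApp _ ts => (fix go ts := match ts with
                   | [::] => [::] | u :: us => tvars u ++ go us end) ts
  end.

Definition ground (t : term) : Prop := tvars t = [::].
Definition gr_list (ts : seq term) : Prop := foldr (fun t P => ground t /\ P) True ts.

Fixpoint substF (s : var S -> term) (t : term) : term :=
  match t with
  | TVar x => s x
  | TApp f ts => TApp f ((fix go ts := match ts with
                   | [::] => [::] | u :: us => substF s u :: go us end) ts)
  end.

Definition env := seq (var S * term).

Fixpoint lookup (e : env) (x : var S) : option term :=
  match e with
  | [::] => None
  | (y, t) :: e' => if y == x then Some t else lookup e' x
  end.

Definition substL (e : env) : term -> term :=
  substF (fun x => odflt (TVar x) (lookup e x)).

Inductive wt : term -> srt S -> Prop :=
| wt_var x s : leS (vsort x) s -> wt (TVar x) s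
| wt_app f ts s : wts ts (fdom f) -> leS (fcod f) s -> wt (TApp f ts) s
with wts : seq term -> seq (srt S) -> Prop :=
| wts_nil : wts [::] [::]
| wts_cons t ts s ss : wt t s -> wts ts ss -> wts (t :: ts) (s :: ss).

Fixpoint rel2 (R : term -> term -> Prop) (ts us : seq term) : Prop :=
  match ts, us with
  | [::], [::] => True
  | t :: ts', u :: us' => R t u /\ rel2 R ts' us'
  | _, _ => False
  end.

(* Patterns [F1]_! o [F2]_?  (pbang = F1, empty if absent; pq = F2). *)
Record pat := Pat { pbang : seq term; pq : seq term }.

Definition patvars (P : pat) : seq (var S) :=
  flatten (map tvars (pbang P ++ pq P)).

Definition substP (e : env) (P : pat) : pat :=
  Pat (map (substL e) (pbang P)) (map (substL e) (pq P)).

Inductive cond : Type :=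
| CFalse
| CB of term
| CNot of cond
| COr of cond & cond
| CEx of pat & cond.

Inductive query : Type :=
| QEmpty
| QFact of term
| QPlus of query & query
| QImp of cond & query
| QFrom of pat & query.

Fixpoint cvars (c : cond) : seq (var S) :=
  match c with
  | CFalse => [::]
  | CB B => tvars B
  | CNot c1 => cvars c1
  | COr c1 c2 => cvars c1 ++ cvars c2
  | CEx P c1 => patvars P ++ cvars c1
  end.

Fixpoint qvars (q : query) : seq (var S) :=
  match q with
  | QEmpty => [::]
  | QFact f => tvars f
  | QPlus q1 q2 => qvars q1 ++ qvars q2
  | QImp c q1 => cvars c ++ qvars q1
  | QFrom P q1 => patvars P ++ qvars q1
  end.

Fixpoint substC (e : env) (c : cond) : cond :=
  match c with
  | CFalse => CFalse
  | CB B => CB (substL e B)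
  | CNot c1 => CNot (substC e c1)
  | COr c1 c2 => COr (substC e c1) (substC e c2)
  | CEx P c1 => CEx (substP e P) (substC e c1)
  end.

Fixpoint substQ (e : env) (q : query) : query :=
  match q with
  | QEmpty => QEmpty
  | QFact f => QFact (substL e f)
  | QPlus q1 q2 => QPlus (substQ e q1) (substQ e q2)
  | QImp c q1 => QImp (substC e c) (substQ e q1)
  | QFrom P q1 => QFrom (substP e P) (substQ e q1)
  end.

Fixpoint closedC (bd : seq (var S)) (c : cond) : Prop :=
  match c with
  | CFalse => True
  | CB B => {subset tvars B <= bd}
  | CNot c1 => closedC bd c1
  | COr c1 c2 => closedC bd c1 /\ closedC bd c2
  | CEx P c1 => closedC (bd ++ patvars P) c1
  end.

Fixpoint closedQ (bd : seq (var S)) (q : query) : Prop :=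
  match q with
  | QEmpty => True
  | QFact f => {subset tvars f <= bd}
  | QPlus q1 q2 => closedQ bd q1 /\ closedQ bd q2
  | QImp c q1 => closedC bd c /\ closedQ bd q1
  | QFrom P q1 => closedQ (bd ++ patvars P) q1
  end.

(* well-formedness: facts have srt Fact, conditions {B} have srt Bool,
   patterns are terminating and preserving (F2 non-empty) *)
Definition wfP (P : pat) : Prop :=
  pq P <> [::] /\ foldr (fun t Pr => wt t (sFact S) /\ Pr) True (pbang P ++ pq P).

Fixpoint wfC (c : cond) : Prop :=
  match c with
  | CFalse => True
  | CB B => wt B (sBool S)
  | CNot c1 => wfC c1
  | COr c1 c2 => wfC c1 /\ wfC c2
  | CEx P c1 => wfP P /\ wfC c1
  end.

Fixpoint wfQ (q : query) : Prop :=
  match q with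
  | QEmpty => True
  | QFact f => wt f (sFact S)
  | QPlus q1 q2 => wfQ q1 /\ wfQ q2
  | QImp c q1 => wfC c /\ wfQ q1
  | QFrom P q1 => wfP P /\ wfQ q1
  end.

(* The algebra of facts D: equality in D (=_{E u A}) is [D], equality modulo
   the structural axioms is [A], and [nf] computes canonical forms w.r.t. the
   confluent terminating equations modulo A. *)
Definition fact_algebra (D A : term -> term -> Prop) (nf : term -> term) : Prop :=
  [/\
      (forall s : srt S, leS s s) /\
      (forall s1 s2 s3 : srt S, leS s1 s2 -> leS s2 s3 -> leS s1 s3) /\
      (forall s1 s2 : srt S, leS s1 s2 -> leS s2 s1 -> s1 = s2) /\
      sFact S != sBool S,
      [/\ (fdom (fTrue S) = [::] /\ fcod (fTrue S) = sBool S) /\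
          (fdom (fFalse S) = [::] /\ fcod (fFalse S) = sBool S),
          fdom (fNot S) = [:: sBool S] /\ fcod (fNot S) = sBool S,
          fdom (fAnd S) = [:: sBool S; sBool S] /\ fcod (fAnd S) = sBool S,
          fdom (fOr S) = [:: sBool S; sBool S] /\ fcod (fOr S) = sBool S &
          forall s, fdom (fEq s) = [:: s; s] /\ fcod (fEq s) = sBool S],
      [/\ (forall t, D t t) /\ (forall t u, D t u -> D u t) /\
          (forall t u w, D t u -> D u w -> D t w),
          (forall f ts us, rel2 D ts us -> D (TApp f ts) (TApp f us)),
          (forall s t u, D t u -> D (substF s t) (substF s u)),
          [/\ (forall t, A t t), (forall t u, A t u -> A u t),
              (forall t u w, A t u -> A u w -> A t w),
              (forall f ts us, rel2 A ts us -> A (TApp f ts) (TApp f us)) &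
              (forall s t u, A t u -> A (substF s t) (substF s u))] &
          (forall t u, A t u -> D t u)],
      (forall t, D (nf t) t) /\ (forall t u, D t u -> A (nf t) (nf u)) &
      [/\ (forall t, ground t -> wt t (sBool S) -> D t bTrue \/ D t bFalse) /\
          ~ D bTrue bFalse,
          (forall t, ground t -> wt t (sBool S) ->
             (D (TApp (fNot S) [:: t]) bTrue <-> D t bFalse)),
          (forall t u, ground t -> ground u -> wt t (sBool S) -> wt u (sBool S) ->
             (D (TApp (fAnd S) [:: t; u]) bTrue <-> D t bTrue /\ D u bTrue)),
          (forall t u, ground t -> ground u -> wt t (sBool S) -> wt u (sBool S) ->
             (D (TApp (fOr S) [:: t; u]) bTrue <-> D t bTrue \/ D u bTrue)) &
          (forall s t u, ground t -> ground u -> wt t s -> wt u s ->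
             (D (TApp (fEq s) [:: t; u]) bTrue <-> D t u))]].

Definition reduced (A : term -> term -> Prop) (nf : term -> term) (t : term) : Prop :=
  A (nf t) t.

Definition ump (A : term -> term -> Prop) (nf : term -> term) (t : term) : Prop :=
  reduced A nf t /\
  forall (t' : term) (s1 s2 : var S -> term),
    ground t' -> reduced A nf t' -> wt t' (sFact S) ->
    A (substF s1 t) t' -> A (substF s2 t) t' ->
    forall x, x \in tvars t -> A (s1 x) (s2 x).

Definition detP A nf (P : pat) : Prop :=
  exists f, pbang P ++ pq P = [:: f] /\ ump A nf f.

Fixpoint detC A nf (c : cond) : Prop :=
  match c with
  | CFalse => True
  | CB _ => True
  | CNot c1 => detC A nf c1
  | COr c1 c2 => detC A nf c1 /\ detC A nf c2
  | CEx P c1 => detP A nf P /\ detC A nf c1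
  end.

Fixpoint detQ A nf (q : query) : Prop :=
  match q with
  | QEmpty => True
  | QFact _ => True
  | QPlus q1 q2 => detQ A nf q1 /\ detQ A nf q2
  | QImp c q1 => detC A nf c /\ detQ A nf q1
  | QFrom P q1 => detP A nf P /\ detQ A nf q1
  end.

Variable D : term -> term -> Prop.

(* equality of multisets of facts in D (AC of o, identity empty) *)
Inductive meq : seq term -> seq term -> Prop :=
| meq_nil : meq [::] [::]
| meq_cons x F G1 G2 y : D x y -> meq F (G1 ++ G2) -> meq (x :: F) (G1 ++ y :: G2).

Fixpoint memD (t : term) (F : seq term) : Prop :=
  match F with
  | [::] => False
  | y :: F' => D t y \/ memD t F'
  end.

Definition newvars (e : env) (P : pat) : seq (var S) :=
  undup [seq y <- patvars P | y \notin map fst e].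

(* G = H o sigma'(P_! o P_?) with sigma' = {a/v, b/w}, b ground and sorted *)
Definition matches (G : seq term) (e : env) (P : pat) (H : seq term) (b : seq term) : Prop :=
  [/\ gr_list b, wts b (map (@vsort S) (newvars e P)) &
      meq G (H ++ map (substL (e ++ zip (newvars e P) b)) (pbang P ++ pq P))].

(* condition-evaluation stack frames; the head of a stack is its top *)
Inductive cframe : Type :=
| Res of term
| NotF
| Ev of env & cond
| EvD of env & cond
| ExF of seq term & env & pat & cond.

Inductive cstep (F : seq term) : seq cframe -> seq cframe -> Prop :=
| cs_false e St : cstep F (Ev e CFalse :: St) (Res bFalse :: St)
| cs_bool e B St : cstep F (Ev e (CB B) :: St) (Res (substL e B) :: St)
| cs_not e c St : cstep F (Ev e (CNot c) :: St) (Ev e c :: NotF :: St)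
| cs_notres B St : cstep F (Res B :: NotF :: St) (Res (TApp (fNot S) [:: B]) :: St)
| cs_or e c1 c2 St : cstep F (Ev e (COr c1 c2) :: St) (Ev e c2 :: EvD e c1 :: St)
| cs_downtrue B e c St : D B bTrue -> cstep F (Res B :: EvD e c :: St) (Res bTrue :: St)
| cs_downfalse B e c St : D B bFalse -> cstep F (Res B :: EvD e c :: St) (Ev e c :: St)
| cs_ex e P c St : cstep F (Ev e (CEx P c) :: St) (ExF F e P c :: St)
| cs_exmatch G e P c St H b : matches G e P H b ->
    cstep F (ExF G e P c :: St)
      (Ev (e ++ zip (newvars e P) b) c
        :: ExF (H ++ map (substL (e ++ zip (newvars e P) b)) (pbang P)) e P c :: St)
| cs_exfalse B G e P c St : D B bFalse ->
    cstep F (Res B :: ExF G e P c :: St) (ExF G e P c :: St)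
| cs_extrue B G e P c St : D B bTrue ->
    cstep F (Res B :: ExF G e P c :: St) (Res bTrue :: St)
| cs_exnone G e P c St : (forall H b, ~ matches G e P H b) ->
    cstep F (ExF G e P c :: St) (Res bFalse :: St).

Inductive cstate : Type :=
| CSt of seq term & seq cframe
| Sat of term.

Inductive cstepS : cstate -> cstate -> Prop :=
| css_step F St St' : cstep F St St' -> cstepS (CSt F St) (CSt F St')
| css_sat F B : cstepS (CSt F [:: Res B]) (Sat B).

Definition initC (F : seq term) (c : cond) : cstate := CSt F [:: Ev [::] c].

Inductive qframe : Type :=
| QEv of env & query
| QCnd of env & seq cframe & query
| QFr of seq term & env & pat & query.

Inductive qstate : Type :=
| QSt of seq term & seq term & seq qframe
| Ans of seq term.

Inductive qstepS : qstate -> qstate -> Prop :=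
| qs_fact F Acc e f St :
    qstepS (QSt F Acc (QEv e (QFact f) :: St)) (QSt F (Acc ++ [:: substL e f]) St)
| qs_empty F Acc e St : qstepS (QSt F Acc (QEv e QEmpty :: St)) (QSt F Acc St)
| qs_plus F Acc e q1 q2 St :
    qstepS (QSt F Acc (QEv e (QPlus q1 q2) :: St)) (QSt F Acc (QEv e q1 :: QEv e q2 :: St))
| qs_imp F Acc e c q St :
    qstepS (QSt F Acc (QEv e (QImp c q) :: St)) (QSt F Acc (QCnd e [:: Ev e c] q :: St))
| qs_condfalse F Acc e B q St : D B bFalse ->
    qstepS (QSt F Acc (QCnd e [:: Res B] q :: St)) (QSt F Acc St)
| qs_condtrue F Acc e B q St : D B bTrue ->
    qstepS (QSt F Acc (QCnd e [:: Res B] q :: St)) (QSt F Acc (QEv e q :: St))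
| qs_cond F Acc e CS CS' q St : cstep F CS CS' ->
    qstepS (QSt F Acc (QCnd e CS q :: St)) (QSt F Acc (QCnd e CS' q :: St))
| qs_from F Acc e P q St :
    qstepS (QSt F Acc (QEv e (QFrom P q) :: St)) (QSt F Acc (QFr F e P q :: St))
| qs_frommatch F Acc G e P q St H b : matches G e P H b ->
    qstepS (QSt F Acc (QFr G e P q :: St))
      (QSt F Acc (QEv (e ++ zip (newvars e P) b) q
        :: QFr (H ++ map (substL (e ++ zip (newvars e P) b)) (pbang P)) e P q :: St))
| qs_fromnone F Acc G e P q St : (forall H b, ~ matches G e P H b) ->
    qstepS (QSt F Acc (QFr G e P q :: St)) (QSt F Acc St)
| qs_ans F Acc : qstepS (QSt F Acc [::]) (Ans Acc).

Definition initQ (F : seq term) (q : query) : qstate := QSt F [::] [:: QEv [::] q].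

End Syntax.

Inductive star (T : Type) (R : T -> T -> Prop) : T -> T -> Prop :=
| star_refl x : star R x x
| star_step x y z : R x y -> star R y z -> star R x z.

Definition reach_nf (T : Type) (R : T -> T -> Prop) (x y : T) : Prop :=
  star R x y /\ forall z, ~ R y z.

(* The condition is Q translated homomorphically: the empty query becomes False,
   a fact f the Boolean test {f = r(x)}, (+) becomes \/, phi => R the conjunction
   of phi with the translation of R, and From P. R becomes Exists P. Under
   x := t the condition machine then runs in lockstep with the query machine:
   each run of one is matched by a run of the other in which the condition
   answers true exactly when r(t) is among the facts produced. Query runs always
   exist, because each match consumes the non-empty P_? from a finite database.
   Patterns are copied unchanged, so determinism is preserved. *)

From mathcomp Require Import all_boot.
From Stdlib Require Import Classical_Prop.
Set Implicit Arguments. Unset Strict Implicit. Unset Printing Implicit Defensive.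

Local Notation bT := (bTrue _).
Local Notation bF := (bFalse _).
Local Notation notB B := (TApp (fNot _) [:: B]).
(* [c1 /\ c2] written with the connectives available in conditions. *)
Local Notation cand c1 c2 := (CNot (COr (CNot c2) (CNot c1))).
(* Matching [P] against [H o sigma'(P_! o P_?)] with [sigma' = {a/v, b/w}]: [ext e P b]
   is the extended environment and [rest H e P b] the facts [H o sigma'(P_!)] left. *)
Local Notation ext e P b := (e ++ zip (newvars e%SEQ P) b).
Local Notation rest H e P b := (H ++ map (substL (ext e P b)) (pbang P)).

Definition all_prop (T : Type) (P : T -> Prop) (l : seq T) : Prop :=
  foldr (fun x Q => P x /\ Q) True l.

(** * Terms, environments and substitution *)

Section Terms.
Variable S : sig.
Implicit Types (t u : term S) (e : env S) (sb : var S -> term S).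

(* The generated principle of the nested inductive [term] has no hypothesis for
   the arguments of [TApp]. *)
Fixpoint term_nested_ind (P : term S -> Prop) (Pvar : forall x, P (TVar x))
  (Papp : forall f ts, all_prop P ts -> P (TApp f ts)) (t : term S) : P t :=
  match t with
  | TVar x => Pvar x
  | TApp f ts => Papp f ts ((fix go ts : all_prop P ts :=
       match ts with
       | [::] => I
       | u :: us => conj (term_nested_ind Pvar Papp u) (go us)
       end) ts)
  end.

Lemma tvars_app f ts : tvars (TApp f ts) = flatten (map (@tvars S) ts).
Proof. by elim: ts => //= u us ->. Qed.

Lemma substF_app sb f ts : substF sb (TApp f ts) = TApp f (map (substF sb) ts).
Proof. by elim: ts => //= u us [->]. Qed.

Lemma eq_in_substF s1 s2 t :
  {in tvars t, s1 =1 s2} -> substF s1 t = substF s2 t.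
Proof.
elim/term_nested_ind: t => [x /= eq_s|f ts IH]; first by apply: eq_s; rewrite inE.
rewrite tvars_app !substF_app => eq_s; congr TApp.
elim: ts IH eq_s => //= u us IHus [IHu IHl] eq_s.
by rewrite IHu ?IHus // => y Hy; apply: eq_s; rewrite mem_cat Hy ?orbT.
Qed.

Lemma substF_ground sb t : ground t -> substF sb t = t.
Proof.
rewrite /ground; elim/term_nested_ind: t => [//|f ts IH].
rewrite tvars_app substF_app => ts_ground; congr TApp.
elim: ts IH ts_ground => //= u us IHus [IHu IHl] /nilP.
by rewrite cat_nilp => /andP[/nilP Hu /nilP Hus]; rewrite IHu ?IHus.
Qed.

Lemma ground_substF sb t :
  {in tvars t, forall y, ground (sb y)} -> ground (substF sb t).
Proof.
rewrite /ground; elim/term_nested_ind: t => [x /= Hsb|f ts IH]; first by apply: Hsb; rewrite inE.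
rewrite tvars_app substF_app tvars_app => Hsb.
elim: ts IH Hsb => //= u us IHus [IHu IHl] Hsb.
by rewrite IHu ?IHus // => y Hy; apply: Hsb; rewrite mem_cat Hy ?orbT.
Qed.

Lemma ground_TApp f ts : all_prop (@ground S) ts -> ground (TApp f ts).
Proof. by rewrite /ground tvars_app; elim: ts => //= u us IH [-> /IH]. Qed.

Hypothesis leS_refl : forall s : srt S, leS s s.
Hypothesis leS_trans : forall s1 s2 s3 : srt S, leS s1 s2 -> leS s2 s3 -> leS s1 s3.

Lemma wt_leS t s1 s2 : wt t s1 -> leS s1 s2 -> wt t s2.
Proof.
case=> [x s Hx|f ts s Hts Hf] Hs; first by constructor; apply: leS_trans Hs.
by apply: wt_app Hts _; apply: leS_trans Hs.
Qed.

Lemma wt_substF sb t s : (forall y, wt (sb y) (vsort y)) -> wt t s -> wt (substF sb t) s.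
Proof.
move=> Hsb; elim/term_nested_ind: t s => [x s /= Hx|f ts IH s Ht].
  by inversion Hx; apply: wt_leS (Hsb x) _.
inversion Ht as [|? ? ? Hts Hf]; subst; rewrite substF_app; apply: wt_app Hf.
elim: ts (fdom f) IH Hts {Ht} => [|u us IHus] ss /= IH Hts; inversion Hts; subst.
  exact: wts_nil.
by apply: wts_cons; [apply: IH.1 | apply: IHus IH.2 _].
Qed.

Lemma size_wts (ts : seq (term S)) ss : wts ts ss -> size ts = size ss.
Proof. by elim=> //= t ts' s ss' _ _ ->. Qed.

Fixpoint wf_env e : Prop :=
  if e is (y, u) :: e' then [/\ ground u, wt u (vsort y) & wf_env e'] else True.

Lemma wf_env_lookup e y u : wf_env e -> lookup e y = Some u -> ground u /\ wt u (vsort y).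
Proof.
elim: e => //= [[z w] e IH] [Gw Ww He]; case: eqP => [<- [<-] //|_]; exact: IH.
Qed.

Lemma lookup_dom e y : y \in map fst e -> exists u, lookup e y = Some u.
Proof.
elim: e => //= [[z w] e IH]; rewrite inE eq_sym; case: eqP => [_ _|_ /IH //]; by exists w.
Qed.

Lemma wf_env_cat e1 e2 : wf_env e1 -> wf_env e2 -> wf_env (e1 ++ e2).
Proof. by elim: e1 => //= [[z w] e IH] [Gw Ww He] He2; split => //; apply: IH. Qed.

Lemma wf_env_zip ys b : gr_list b -> wts b (map (@vsort S) ys) -> wf_env (zip ys b).
Proof.
elim: ys b => [|y ys IH] [|u b] //= [Gu Gb] Hw; inversion Hw; subst; split => //.
exact: IH.
Qed.

Lemma wt_substL e t s : wf_env e -> wt t s -> wt (substL e t) s.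
Proof.
move=> He; apply: wt_substF => y; case E: (lookup e y) => [u|] /=.
  exact: (wf_env_lookup He E).2.
by constructor.
Qed.

Lemma ground_substL e t : wf_env e -> {subset tvars t <= map fst e} -> ground (substL e t).
Proof.
move=> He Ht; apply: ground_substF => y /Ht /lookup_dom [u E]; rewrite E.
exact: (wf_env_lookup He E).1.
Qed.

End Terms.

Section Syntax.
Variable S : sig.
Implicit Types (t u : term S) (e : env S) (c : cond S) (q : query S) (P : pat S).

Lemma closedC_sub c (bd bd' : seq (var S)) :
  {subset bd <= bd'} -> closedC bd c -> closedC bd' c.
Proof.
elim: c bd bd' => [|B|c IH|c1 IH1 c2 IH2|P c IH] bd bd' sub //=.
- by move=> HB y /HB /sub.
- exact: IH.
- by case=> /(IH1 _ _ sub) ? /(IH2 _ _ sub).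
- by apply: IH => y; rewrite !mem_cat => /orP[/sub -> | ->]; rewrite ?orbT.
Qed.

Lemma closedQ_sub q (bd bd' : seq (var S)) :
  {subset bd <= bd'} -> closedQ bd q -> closedQ bd' q.
Proof.
elim: q bd bd' => //= [f|q1 IH1 q2 IH2|c q IH|P q IH] bd bd' sub.
- by move=> Hf y /Hf /sub.
- by case=> /(IH1 _ _ sub) ? /(IH2 _ _ sub).
- by case=> /(closedC_sub sub) ? /(IH _ _ sub).
- by apply: IH => y; rewrite !mem_cat => /orP[/sub -> | ->]; rewrite ?orbT.
Qed.

Hypothesis leS_refl : forall s : srt S, leS s s.
Hypothesis leS_trans : forall s1 s2 s3 : srt S, leS s1 s2 -> leS s2 s3 -> leS s1 s3.

Lemma wfP_substP e P : wf_env e -> wfP P -> wfP (substP e P).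
Proof.
move=> He [HP Hwt]; split; first by case: P HP {Hwt} => ? [].
rewrite /substP /= -map_cat; elim: (pbang P ++ pq P) Hwt => //= u l IH [Hu Hl].
by split; [apply: wt_substL | apply: IH].
Qed.

Lemma wfC_substC e c : wf_env e -> wfC c -> wfC (substC e c).
Proof.
move=> He; elim: c => //= [B|c1 IH1 c2 IH2|P c IH].
- exact: wt_substL.
- by case=> /IH1 ? /IH2.
- by case=> /(wfP_substP He) ? /IH.
Qed.

Lemma wfQ_substQ e q : wf_env e -> wfQ q -> wfQ (substQ e q).
Proof.
move=> He; elim: q => //= [f|q1 IH1 q2 IH2|c q IH|P q IH].
- exact: wt_substL.
- by case=> /IH1 ? /IH2.
- by case=> /(wfC_substC He) ? /IH.
- by case=> /(wfP_substP He) ? /IH.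
Qed.

End Syntax.

(** * The membership condition *)

Section MembershipCondition.
Variable S : sig.
Implicit Types (t u : term S) (e l : env S) (c : cond S) (q : query S) (P : pat S).

(* The condition phi^{x|r}_Q of the paper, with [rt] standing for r(x). *)
Fixpoint mem_cond (rt : term S) q : cond S :=
  match q with
  | QEmpty => CFalse S
  | QFact f => CB (TApp (fEq (sFact S)) [:: f; rt])
  | QPlus q1 q2 => COr (mem_cond rt q1) (mem_cond rt q2)
  | QImp c q1 => cand c (mem_cond rt q1)
  | QFrom P q1 => CEx P (mem_cond rt q1)
  end.

Lemma closedC_mem_cond rt q bd : ground rt -> closedQ bd q -> closedC bd (mem_cond rt q).
Proof.
move=> Grt; elim: q bd => //= [f|q1 IH1 q2 IH2|c q IH|P q IH] bd.
- by move=> Hf y; rewrite Grt !cats0 => /Hf.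
- by case=> /IH1 ? /IH2.
- by case=> ? /IH.
- exact: IH.
Qed.

Lemma detC_mem_cond A nf rt q : detQ A nf q -> detC A nf (mem_cond rt q).
Proof. by elim: q => //= [q1 IH1 q2 IH2|c q IH|P q IH] [? ?]; split; auto. Qed.

Lemma wfC_mem_cond rt q :
  (forall s : srt S, leS s s) ->
  fdom (fEq (sFact S)) = [:: sFact S; sFact S] -> fcod (fEq (sFact S)) = sBool S ->
  wt rt (sFact S) -> wfQ q -> wfC (mem_cond rt q).
Proof.
move=> leS_refl Eq_dom Eq_cod Wrt; elim: q => //= [f|q1 IH1 q2 IH2|c q IH|P q IH].
- move=> Wf; apply: wt_app; last by rewrite Eq_cod.
  by rewrite Eq_dom; do 2 apply: wts_cons => //; exact: wts_nil.
- by case=> /IH1 ? /IH2.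
- by case=> ? /IH.
- by case=> ? /IH.
Qed.

Section SubstMembershipCondition.
Variables (x : seq (var S)) (ts : seq (term S)) (l : env S).

Lemma lookup_zip_notin y : y \notin x -> lookup (zip x ts ++ l) y = lookup l y.
Proof.
elim: x ts => [|z zs IH] [|w ws] //=.
by rewrite inE negb_or eq_sym => /andP[/negbTE -> /IH].
Qed.

Lemma substL_zip_vars : uniq x -> size x = size ts ->
  map (substL (zip x ts ++ l)) (map (@TVar S) x) = ts.
Proof.
rewrite -map_comp; elim: x ts => [|z zs IH] [|w ws] //= /andP[zs_z zs_uniq] [Hs].
rewrite {1}/substL /= eqxx; congr cons; rewrite -[RHS](IH ws) //.
apply: (iffLR (eq_in_map _ _ _)) => y Hy; rewrite /= /substL /=.
by have /negbTE -> : z != y by apply: contraNneq zs_z => ->.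
Qed.

Lemma substL_zip_notin u : {in tvars u, forall y, y \notin x} ->
  substL (zip x ts ++ l) u = substL l u.
Proof. by move=> Hu; apply: eq_in_substF => y /Hu Hy; rewrite /= lookup_zip_notin. Qed.

Lemma map_substL_zip_notin us : {in flatten (map (@tvars S) us), forall y, y \notin x} ->
  map (substL (zip x ts ++ l)) us = map (substL l) us.
Proof.
elim: us => //= u us IH Hus; rewrite substL_zip_notin ?IH // => y Hy;
  by apply: Hus; rewrite mem_cat Hy ?orbT.
Qed.

Lemma substP_zip_notin P : {in patvars P, forall y, y \notin x} ->
  substP (zip x ts ++ l) P = substP l P.
Proof.
rewrite /patvars map_cat flatten_cat => HP.
by rewrite /substP !map_substL_zip_notin // => y Hy; apply: HP; rewrite mem_cat Hy ?orbT.
Qed.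

Lemma substC_zip_notin c : {in cvars c, forall y, y \notin x} ->
  substC (zip x ts ++ l) c = substC l c.
Proof.
elim: c => //= [B|c IH|c1 IH1 c2 IH2|P c IH] Hc.
- by rewrite substL_zip_notin.
- by rewrite IH.
- by rewrite IH1 ?IH2 // => y Hy; apply: Hc; rewrite mem_cat Hy ?orbT.
- by rewrite substP_zip_notin ?IH // => y Hy; apply: Hc; rewrite mem_cat Hy ?orbT.
Qed.

Lemma substC_mem_cond r q : uniq x -> size x = size ts ->
  {in qvars q, forall y, y \notin x} ->
  substC (zip x ts ++ l) (mem_cond (TApp r (map (@TVar S) x)) q) =
  mem_cond (TApp r ts) (substQ l q).
Proof.
move=> x_uniq size_ts; elim: q => //= [f|q1 IH1 q2 IH2|c q IH|P q IH] Hq.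
- rewrite /substL !substF_app; congr (CB (TApp _ [:: _; TApp _ _])).
    exact: substL_zip_notin.
  exact: substL_zip_vars.
- by rewrite IH1 ?IH2 // => y Hy; apply: Hq; rewrite mem_cat Hy ?orbT.
- by rewrite IH ?substC_zip_notin // => y Hy; apply: Hq; rewrite mem_cat Hy ?orbT.
- by rewrite IH ?substP_zip_notin // => y Hy; apply: Hq; rewrite mem_cat Hy ?orbT.
Qed.

End SubstMembershipCondition.
End MembershipCondition.

(** * The evaluation machines *)

Section Star.
Variables (T : Type) (R : T -> T -> Prop).

Lemma star_trans x y z : star R x y -> star R y z -> star R x z.
Proof. by elim=> // x0 y0 z0 Hxy _ IH /IH; apply: star_step. Qed.

(* Unlike the generated principle, this one keeps the target of [star] fixed. *)
Lemma star_ind_to (z : T) (P : T -> Prop) : P z ->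
  (forall x y, R x y -> star R y z -> P y -> P x) -> forall x, star R x z -> P x.
Proof.
move=> Pz IH x H; elim: H Pz IH => // x0 y0 z0 Hxy Hyz IHy Pz IH.
by apply: IH Hxy Hyz (IHy Pz IH).
Qed.

Lemma star1 x y : R x y -> star R x y.
Proof. by move=> Hxy; apply: star_step Hxy (star_refl _ _). Qed.

End Star.

Section ConditionMachine.
Variables (S : sig) (D : term S -> term S -> Prop) (F : seq (term S)).
Notation cst := (cstep D F).
Implicit Types (s St : seq (cframe S)) (B : term S).

Definition is_result s : bool := if s is [:: Res _] then true else false.

Lemma cstep_cat s s' St : cst s s' -> cst (s ++ St) (s' ++ St).
Proof. by case=> *; econstructor; eauto. Qed.

Lemma cstar_cat s s' St : star cst s s' -> star cst (s ++ St) (s' ++ St).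
Proof.
by elim=> [s1|s1 s2 s3 /(cstep_cat St) H12 _]; [apply: star_refl | apply: star_step].
Qed.

Lemma cstep_Res B s : ~ cst [:: Res B] s.
Proof. by move=> H; inversion H. Qed.

Lemma cstar_result B' B : star cst [:: Res B'] [:: Res B] -> B' = B.
Proof. by move=> H; inversion H as [|? ? ? Hstep]; [|case: (cstep_Res Hstep)]. Qed.

Lemma cstar_first s B : star cst s [:: Res B] -> ~~ is_result s ->
  exists2 y, cst s y & star cst y [:: Res B].
Proof. by move=> H; inversion H as [|? y ? Hxy Hyz]; subst => // _; exists y. Qed.

Lemma cstep_cat_inv s St y : cst (s ++ St) y -> s <> [::] -> ~~ is_result s ->
  exists2 s', cst s s' & y = s' ++ St.
Proof.
case: s => [|fr [|fr' s]] //= H _ Hs; inversion H; subst => //;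
  by eexists; [econstructor; eauto | ].
Qed.

Lemma cstep_nonnil s s' : cst s s' -> s' <> [::].
Proof. by case. Qed.

Lemma cstar_cat_inv s St B : star cst (s ++ St) [:: Res B] -> s <> [::] ->
  exists2 B1, star cst s [:: Res B1] & star cst (Res B1 :: St) [:: Res B].
Proof.
move Ex: (s ++ St) => x H; move: s Ex; elim/star_ind_to: x / H.
  move=> [|fr [|fr' s]] // [-> <-] _; exists B; exact: star_refl.
move=> x y Hxy Hyz IH s Ex s_nil; case Hs: (is_result s).
  case: s Hs Ex {s_nil} => [|[B1| | | |] [|]] // _ Ex; subst x.
  by exists B1; [apply: star_refl | apply: star_step Hxy Hyz].
rewrite -Ex in Hxy; case: (cstep_cat_inv Hxy s_nil (negbT Hs)) => s' Hss' Ey.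
have [B1 Hs'B1 HB1] := IH s' (esym Ey) (cstep_nonnil Hss').
by exists B1 => //; apply: star_step Hss' Hs'B1.
Qed.

Definition crun s B := star cst s [:: Res B].

Lemma crun_cons fr St B1 B : crun [:: fr] B1 -> crun (Res B1 :: St) B -> crun (fr :: St) B.
Proof. by move=> /(cstar_cat St); apply: star_trans. Qed.

Lemma crun_cons_inv fr St B : crun (fr :: St) B ->
  exists2 B1, crun [:: fr] B1 & crun (Res B1 :: St) B.
Proof. by move=> H; apply: (@cstar_cat_inv [:: fr]). Qed.

Lemma crun_Res B' B : crun [:: Res B'] B <-> B' = B.
Proof. by split=> [/cstar_result | ->]; [|apply: star_refl]. Qed.

Definition cEv_next e c St :=
  match c with
  | CFalse => Res bF :: St
  | CB B => Res (substL e B) :: St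
  | CNot c1 => Ev e c1 :: NotF S :: St
  | COr c1 c2 => Ev e c2 :: EvD e c1 :: St
  | CEx P c1 => ExF F e P c1 :: St
  end.

Lemma crun_Ev e c St B : crun (Ev e c :: St) B <-> crun (cEv_next e c St) B.
Proof.
split=> [/cstar_first [//|y Hy]|]; first by inversion Hy.
by apply: star_step; case: c; constructor.
Qed.

Lemma crun_Res_Not B1 St B :
  crun (Res B1 :: NotF S :: St) B <-> crun (Res (notB B1) :: St) B.
Proof.
split=> [/cstar_first [//|y Hy]|]; first by inversion Hy.
by apply: star_step; constructor.
Qed.

Lemma crun_Res_EvD_inv B1 e c St B : crun (Res B1 :: EvD e c :: St) B ->
  (D B1 bT /\ crun (Res bT :: St) B) \/ (D B1 bF /\ crun (Ev e c :: St) B).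
Proof. by case/cstar_first => // y Hy; inversion Hy; subst; [left | right]. Qed.

Lemma crun_Res_ExF_inv B1 G e P c St B : crun (Res B1 :: ExF G e P c :: St) B ->
  (D B1 bT /\ crun (Res bT :: St) B) \/
  (D B1 bF /\ crun (ExF G e P c :: St) B).
Proof. by case/cstar_first => // y Hy; inversion Hy; subst; [right | left]. Qed.

Lemma crun_not e c B : crun [:: Ev e (CNot c)] B <-> exists2 B1, crun [:: Ev e c] B1 & B = notB B1.
Proof.
split=> [/crun_Ev/crun_cons_inv [B1 H1 /crun_Res_Not/crun_Res <-] | [B1 H1 ->]].
  by exists B1.
by apply/crun_Ev/(crun_cons H1)/crun_Res_Not/crun_Res.
Qed.

Lemma crun_or_inv e c1 c2 B : crun [:: Ev e (COr c1 c2)] B ->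
  exists2 B2, crun [:: Ev e c2] B2 & (D B2 bT /\ B = bT) \/ (D B2 bF /\ crun [:: Ev e c1] B).
Proof.
move/crun_Ev/crun_cons_inv => [B2 H2 /crun_Res_EvD_inv [[T2 /crun_Res <-]|[F2 H1]]].
  by exists B2 => //; left.
by exists B2 => //; right.
Qed.

Lemma crun_or_true e c1 c2 B2 : crun [:: Ev e c2] B2 -> D B2 bT -> crun [:: Ev e (COr c1 c2)] bT.
Proof. by move=> H2 T2; apply/crun_Ev/(crun_cons H2)/star1/cs_downtrue. Qed.

Lemma crun_or_false e c1 c2 B2 B : crun [:: Ev e c2] B2 -> D B2 bF ->
  crun [:: Ev e c1] B -> crun [:: Ev e (COr c1 c2)] B.
Proof. by move=> H2 F2 H1; apply/crun_Ev/(crun_cons H2)/(star_step _ H1)/cs_downfalse. Qed.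

Lemma crun_and_inv e c1 c2 B : crun [:: Ev e (cand c1 c2)] B ->
  exists2 B1, crun [:: Ev e c1] B1 &
    (D (notB B1) bT /\ B = notB bT) \/
    (D (notB B1) bF /\ exists2 B2, crun [:: Ev e c2] B2 & B = notB (notB B2)).
Proof.
case/crun_not => Bor /crun_or_inv [_ /crun_not [B1 H1 ->] Hor] ->; exists B1 => //.
case: Hor => [[T1 ->]|[F1 /crun_not [B2 H2 ->]]]; first by left.
by right; split => //; exists B2.
Qed.

Lemma crun_and_false e c1 c2 B1 : crun [:: Ev e c1] B1 -> D (notB B1) bT ->
  crun [:: Ev e (cand c1 c2)] (notB bT).
Proof.
move=> H1 T1; apply/crun_not; exists bT => //.
by apply: crun_or_true T1; apply/crun_not; exists B1.
Qed.

Lemma crun_and_true e c1 c2 B1 B2 : crun [:: Ev e c1] B1 -> D (notB B1) bF ->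
  crun [:: Ev e c2] B2 -> crun [:: Ev e (cand c1 c2)] (notB (notB B2)).
Proof.
move=> H1 F1 H2; apply/crun_not; exists (notB B2) => //.
by apply: (crun_or_false _ F1); apply/crun_not; [exists B1 | exists B2].
Qed.

Lemma crun_ExF_inv G e P c B : crun [:: ExF G e P c] B ->
  (exists H b, matches D G e P H b /\ exists2 B1, crun [:: Ev (ext e P b) c] B1 &
     (D B1 bT /\ B = bT) \/ (D B1 bF /\ crun [:: ExF (rest H e P b) e P c] B)) \/
  ((forall H b, ~ matches D G e P H b) /\ B = bF).
Proof.
case/cstar_first => // y Hy Hyz; inversion Hy; subst; last first.
  by right; split => //; apply/esym/crun_Res.
left; exists H, b; split => //.
case/crun_cons_inv: Hyz => B1 H1 /crun_Res_ExF_inv [[T1 /crun_Res <-]|[F1 HB]].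
  by exists B1 => //; left.
by exists B1 => //; right.
Qed.

Lemma crun_ExF_true G e P c H b B1 : matches D G e P H b ->
  crun [:: Ev (ext e P b) c] B1 -> D B1 bT -> crun [:: ExF G e P c] bT.
Proof.
move=> Hm H1 T1; apply: star_step (cs_exmatch _ _ _ Hm) _.
by apply: (crun_cons H1); apply/star1/cs_extrue.
Qed.

Lemma crun_ExF_false G e P c H b B1 B : matches D G e P H b ->
  crun [:: Ev (ext e P b) c] B1 -> D B1 bF ->
  crun [:: ExF (rest H e P b) e P c] B -> crun [:: ExF G e P c] B.
Proof.
move=> Hm H1 F1 HB; apply: star_step (cs_exmatch _ _ _ Hm) _.
by apply: (crun_cons H1); apply: star_step HB; apply: cs_exfalse.
Qed.

Lemma crun_ExF_none G e P c : (forall H b, ~ matches D G e P H b) -> crun [:: ExF G e P c] bF.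
Proof. by move=> Hnm; apply: star1; apply: cs_exnone. Qed.

Lemma reach_Sat_crun s B : reach_nf (cstepS D) (CSt F s) (Sat B) <-> crun s B.
Proof.
split=> [[H _] | H]; last first.
  split=> [|z Hz]; last by inversion Hz.
  apply: (@star_trans _ _ _ (CSt F [:: Res B])); last by apply/star1/css_sat.
  by elim: H => [s0|s1 s2 s3 H12 _ IH]; [apply: star_refl | apply: star_step IH; constructor].
move Ex: (CSt F s) => x in H; elim/star_ind_to: x / H s Ex => [|x y Hxy Hyz IH] s Ex //.
subst x; inversion Hxy; subst; first exact: star_step (IH _ erefl).
by inversion Hyz as [|? ? ? Hsat]; [apply: star_refl | inversion Hsat].
Qed.

End ConditionMachine.

Section QueryMachine.
Variables (S : sig) (D : term S -> term S -> Prop) (F : seq (term S)).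
Notation cst := (cstep D F).
Notation qst := (@qstepS S D).
Implicit Types (s St : seq (qframe S)) (A Out : seq (term S)).

Lemma qstep_QSt A s y : qst (QSt F A s) y ->
  (s = [::] /\ y = Ans A) \/ exists A' s', y = QSt F A' s'.
Proof. by move=> H; inversion H; subst; eauto. Qed.

Lemma qstar_Ans Out z : star qst (Ans Out) z -> z = Ans Out.
Proof. by move=> H; inversion H as [|? ? ? Hstep]; [|inversion Hstep]. Qed.

Lemma qstep_cat A fr s A' s' St : qst (QSt F A (fr :: s)) (QSt F A' s') ->
  qst (QSt F A (fr :: s ++ St)) (QSt F A' (s' ++ St)).
Proof. by move=> H; inversion H; subst; econstructor; eauto. Qed.

Lemma qstep_cat_inv A fr s St y : qst (QSt F A (fr :: s ++ St)) y ->
  exists A' s', qst (QSt F A (fr :: s)) (QSt F A' s') /\ y = QSt F A' (s' ++ St).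
Proof. by move=> H; inversion H; subst; do 2 eexists; (split; [econstructor; eauto|]). Qed.

Lemma qstar_cat A s A' St : star qst (QSt F A s) (QSt F A' [::]) ->
  star qst (QSt F A (s ++ St)) (QSt F A' St).
Proof.
move Ex: (QSt F A s) => x H; elim/star_ind_to: x / H A s Ex => [A s [-> ->]|x y Hxy Hyz IH A s Ex].
  exact: star_refl.
subst x; case: s Hxy => [|fr s] Hxy; first by inversion Hxy; subst; move/qstar_Ans: Hyz.
have [[//]|[A1 [s1 Ey]]] := qstep_QSt Hxy; subst y.
exact: star_step (qstep_cat St Hxy) (IH _ _ erefl).
Qed.

Lemma qstar_cat_inv A s St Out : star qst (QSt F A (s ++ St)) (QSt F Out [::]) ->
  exists2 A1, star qst (QSt F A s) (QSt F A1 [::]) & star qst (QSt F A1 St) (QSt F Out [::]).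
Proof.
move Ex: (QSt F A (s ++ St)) => x H; elim/star_ind_to: x / H A s Ex => [|x y Hxy Hyz IH] A s Ex.
  by case: Ex; case: s => //= -> ->; exists Out; apply: star_refl.
subst x; case: s Hxy => [|fr s] Hxy.
  by exists A; [apply: star_refl | apply: star_step Hxy Hyz].
have [A' [s' [Hstep Ey]]] := qstep_cat_inv Hxy; subst y.
by have [A1 H1 H2] := IH _ _ erefl; exists A1 => //; apply: star_step Hstep H1.
Qed.

Lemma qstep_acc A s A' s' : qst (QSt F A s) (QSt F A' s') ->
  exists2 X, A' = A ++ X & forall A0, qst (QSt F A0 s) (QSt F (A0 ++ X) s').
Proof.
move=> H; inversion H; subst; first by exists [:: substL e f] => // A0; constructor.
all: by exists [::]; rewrite ?cats0 // => A0; rewrite cats0; econstructor; eauto.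
Qed.

Lemma qstar_acc A s A' s' : star qst (QSt F A s) (QSt F A' s') ->
  exists2 X, A' = A ++ X & forall A0, star qst (QSt F A0 s) (QSt F (A0 ++ X) s').
Proof.
move Ex: (QSt F A s) => x H; elim/star_ind_to: x / H A s Ex => [|x y Hxy Hyz IH] A s Ex.
  by case: Ex => -> ->; exists [::] => [|A0]; rewrite cats0 //; apply: star_refl.
subst x; have [[_ Ey]|[A1 [s1 Ey]]] := qstep_QSt Hxy; subst y; first by move/qstar_Ans: Hyz.
have [X1 EA1 H1] := qstep_acc Hxy; have [X2 EA' H2] := IH _ _ erefl.
exists (X1 ++ X2) => [|A0]; first by rewrite EA' EA1 catA.
by rewrite catA; apply: star_step (H1 A0) (H2 _).
Qed.

Lemma qstar_nil A Out : star qst (QSt F A [::]) (QSt F Out [::]) -> A = Out.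
Proof.
move=> H; inversion H as [|? y ? Hxy Hyz]; subst => //.
by inversion Hxy; subst; move/qstar_Ans: Hyz.
Qed.

Lemma qstar_to_Ans A s Out : star qst (QSt F A s) (Ans Out) ->
  star qst (QSt F A s) (QSt F Out [::]).
Proof.
move Ex: (QSt F A s) => x H; elim/star_ind_to: x / H A s Ex => [//|x y Hxy Hyz IH] A s Ex.
subst x; have [[-> Ey]|[A1 [s1 Ey]]] := qstep_QSt Hxy; subst y.
  by move/qstar_Ans: Hyz => [->]; apply: star_refl.
exact: star_step Hxy (IH _ _ erefl).
Qed.

Lemma qstar_cond A e CS CS' q St : star cst CS CS' ->
  star qst (QSt F A (QCnd e CS q :: St)) (QSt F A (QCnd e CS' q :: St)).
Proof.
elim=> [CS0|CS1 CS2 CS3 H12 _ IH]; first exact: star_refl.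
by apply: star_step IH; apply: qs_cond.
Qed.

Lemma qstar_cond_inv A e CS q St Out :
  star qst (QSt F A (QCnd e CS q :: St)) (QSt F Out [::]) ->
  exists2 B, star cst CS [:: Res B] &
    star qst (QSt F A (QCnd e [:: Res B] q :: St)) (QSt F Out [::]).
Proof.
move Ex: (QSt F A (QCnd e CS q :: St)) => x H.
elim/star_ind_to: x / H CS Ex => [|x y Hxy Hyz IH] CS Ex; first by case: Ex.
subst x; inversion Hxy; subst; try by exists B; [apply: star_refl | apply: star_step Hxy Hyz].
by have [B H1 H2] := IH _ erefl; exists B => //; apply: star_step H1.
Qed.

Definition qrun s Out := star qst (QSt F [::] s) (QSt F Out [::]).

Lemma qrun_first fr St Out : qrun (fr :: St) Out ->
  exists2 y, qst (QSt F [::] (fr :: St)) y & star qst y (QSt F Out [::]).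
Proof. by move=> H; inversion H as [|? y ? Hxy Hyz]; exists y. Qed.

Lemma qrun_cons fr St O1 O2 : qrun [:: fr] O1 -> qrun St O2 -> qrun (fr :: St) (O1 ++ O2).
Proof.
move=> H1 /qstar_acc [X -> HX].
exact: star_trans (qstar_cat St H1) (HX O1).
Qed.

Lemma qrun_cons_inv fr St Out : qrun (fr :: St) Out ->
  exists O1 O2, [/\ Out = O1 ++ O2, qrun [:: fr] O1 & qrun St O2].
Proof.
case/(@qstar_cat_inv _ [:: fr]) => O1 H1 /qstar_acc [X -> HX].
by exists O1, X; split => //; apply: (HX [::]).
Qed.

Lemma qrun_empty e Out : qrun [:: QEv e (QEmpty S)] Out <-> Out = [::].
Proof.
split=> [/qrun_first [y Hy] | ->]; first by inversion Hy; subst => /qstar_nil.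
by apply: star1; apply: qs_empty.
Qed.

Lemma qrun_fact e f Out : qrun [:: QEv e (QFact f)] Out <-> Out = [:: substL e f].
Proof.
split=> [/qrun_first [y Hy] | ->]; first by inversion Hy; subst => /qstar_nil.
by apply: star1; apply: qs_fact.
Qed.

Lemma qrun_plus e q1 q2 Out : qrun [:: QEv e (QPlus q1 q2)] Out <->
  exists O1 O2, [/\ Out = O1 ++ O2, qrun [:: QEv e q1] O1 & qrun [:: QEv e q2] O2].
Proof.
split=> [/qrun_first [y Hy] | [O1 [O2 [-> H1 H2]]]].
  by inversion Hy; subst => /qrun_cons_inv.
by apply: star_step _ (qrun_cons H1 H2); apply: qs_plus.
Qed.

Lemma qrun_imp_inv e c q Out : qrun [:: QEv e (QImp c q)] Out ->
  exists2 Bc, crun D F [:: Ev e c] Bc &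
    (D Bc bF /\ Out = [::]) \/ (D Bc bT /\ qrun [:: QEv e q] Out).
Proof.
case/qrun_first => y Hy; inversion Hy; subst => /qstar_cond_inv [Bc HBc H].
exists Bc => //; inversion H as [|? y ? Hxy Hyz]; subst; inversion Hxy; subst.
- by left; rewrite -(qstar_nil Hyz).
- by right.
- by exfalso; apply: cstep_Res; eassumption.
Qed.

Lemma qrun_imp_false e c q Bc : crun D F [:: Ev e c] Bc -> D Bc bF ->
  qrun [:: QEv e (QImp c q)] [::].
Proof.
move=> HBc F_Bc; apply: star_step (qs_imp _ _ _ _ _ _ _) _.
by apply: star_trans (qstar_cond _ _ _ _ HBc) _; apply/star1/qs_condfalse.
Qed.

Lemma qrun_imp_true e c q Bc Out : crun D F [:: Ev e c] Bc -> D Bc bT ->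
  qrun [:: QEv e q] Out -> qrun [:: QEv e (QImp c q)] Out.
Proof.
move=> HBc T_Bc Hq; apply: star_step (qs_imp _ _ _ _ _ _ _) _.
by apply: star_trans (qstar_cond _ _ _ _ HBc) _; apply: star_step Hq; apply: qs_condtrue.
Qed.

Lemma qrun_from e P q Out : qrun [:: QEv e (QFrom P q)] Out <-> qrun [:: QFr F e P q] Out.
Proof.
split=> [/qrun_first [y Hy] | ]; first by inversion Hy; subst.
by apply: star_step; apply: qs_from.
Qed.

Lemma qrun_QFr_inv G e P q Out : qrun [:: QFr G e P q] Out ->
  (exists H b, matches D G e P H b /\ exists O1 O2,
     [/\ Out = O1 ++ O2, qrun [:: QEv (ext e P b) q] O1 & qrun [:: QFr (rest H e P b) e P q] O2]) \/
  ((forall H b, ~ matches D G e P H b) /\ Out = [::]).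
Proof.
case/qrun_first => y Hy; inversion Hy; subst; last by move/qstar_nil => <-; right.
by move/qrun_cons_inv => HOut; left; exists H, b.
Qed.

Lemma qrun_QFr_match G e P q H b O1 O2 : matches D G e P H b ->
  qrun [:: QEv (ext e P b) q] O1 -> qrun [:: QFr (rest H e P b) e P q] O2 ->
  qrun [:: QFr G e P q] (O1 ++ O2).
Proof. by move=> Hm H1 H2; apply: star_step (qs_frommatch _ _ _ _ Hm) (qrun_cons H1 H2). Qed.

Lemma qrun_QFr_none G e P q : (forall H b, ~ matches D G e P H b) -> qrun [:: QFr G e P q] [::].
Proof. by move=> Hnm; apply: star1; apply: qs_fromnone. Qed.

Lemma reach_Ans_qrun s Out : reach_nf qst (QSt F [::] s) (Ans Out) <-> qrun s Out.
Proof.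
split=> [[/qstar_to_Ans H _] // | H].
split=> [|z Hz]; last by inversion Hz.
by apply: star_trans H _; apply/star1/qs_ans.
Qed.

End QueryMachine.

(** * Simulation of queries by conditions *)

Section Simulation.
Variables (S : sig) (D A : term S -> term S -> Prop) (nf : term S -> term S).
Hypothesis HD : fact_algebra D A nf.
Variable F : seq (term S).
Implicit Types (t u B : term S) (e : env S) (c : cond S) (q : query S) (P : pat S).
Implicit Types (Out L M : seq (term S)).

Local Notation crun := (crun D F).
Local Notation qrun := (qrun D F).

Let leS_refl : forall s : srt S, leS s s. Proof. by case: HD => [[]]. Qed.
Let leS_trans : forall s1 s2 s3 : srt S, leS s1 s2 -> leS s2 s3 -> leS s1 s3.
Proof. by case: HD => [[_ []]]. Qed.
Let D_refl : forall t, D t t. Proof. by case: HD => _ _ [[]]. Qed.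
Let D_sym : forall t u, D t u -> D u t. Proof. by case: HD => _ _ [[_ []]]. Qed.
Let D_trans : forall t u w, D t u -> D u w -> D t w. Proof. by case: HD => _ _ [[_ []]]. Qed.
Let true_rank : fdom (fTrue S) = [::] /\ fcod (fTrue S) = sBool S.
Proof. by case: HD => _ [[]]. Qed.
Let false_rank : fdom (fFalse S) = [::] /\ fcod (fFalse S) = sBool S.
Proof. by case: HD => _ [[]]. Qed.
Let not_rank : fdom (fNot S) = [:: sBool S] /\ fcod (fNot S) = sBool S.
Proof. by case: HD => _ []. Qed.
Let eq_rank s : fdom (fEq s) = [:: s; s] /\ fcod (fEq s) = sBool S.
Proof. by case: HD => _ []. Qed.
Let true_neq_false : ~ D bT bF. Proof. by case: HD => _ _ _ _ [[]]. Qed.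
Let eq_true s t u : ground t -> ground u -> wt t s -> wt u s ->
  (D (TApp (fEq s) [:: t; u]) bT <-> D t u).
Proof. by case: HD => _ _ _ _ [] => _ _ _ _ /(_ s t u). Qed.

Definition good_bool B := ground B /\ wt B (sBool S).

Let bool_dichotomy B : good_bool B -> D B bT \/ D B bF.
Proof. by case: HD => _ _ _ _ [[dich _] _ _ _ _] [GB WB]; apply: dich. Qed.
Let not_true B : good_bool B -> (D (notB B) bT <-> D B bF).
Proof. by case: HD => _ _ _ _ [_ not_iff _ _ _] [GB WB]; apply: not_iff. Qed.

Lemma good_true : good_bool bT.
Proof.
by split => //; apply: wt_app; [rewrite true_rank.1; apply: wts_nil | rewrite true_rank.2].
Qed.

Lemma good_false : good_bool bF.
Proof.
by split => //; apply: wt_app; [rewrite false_rank.1; apply: wts_nil | rewrite false_rank.2].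
Qed.

Lemma good_not B : good_bool B -> good_bool (notB B).
Proof.
case=> GB WB; split; first by rewrite /ground /= GB.
apply: wt_app; last by rewrite not_rank.2.
by rewrite not_rank.1; apply: wts_cons WB (wts_nil _).
Qed.

Lemma true_false_contra B : D B bT -> D B bF -> False.
Proof. by move=> TB FB; apply: true_neq_false; apply: D_trans (D_sym TB) FB. Qed.

Lemma not_false B : good_bool B -> (D (notB B) bF <-> D B bT).
Proof.
move=> GB; split=> [Fn | TB].
  by case: (bool_dichotomy GB) => // FB; case: (true_false_contra (proj2 (not_true GB) FB) Fn).
case: (bool_dichotomy (good_not GB)) => // Tn.
by case: (true_false_contra TB (proj1 (not_true GB) Tn)).
Qed.

Lemma matches_ext G e P H b : wf_env e -> matches D G e P H b ->
  wf_env (ext e P b) /\ {subset map fst e ++ patvars P <= map fst (ext e P b)}.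
Proof.
move=> He [Gb Wb _]; split; first exact: wf_env_cat He (wf_env_zip Gb Wb).
have size_b : size (newvars e P) <= size b by rewrite (size_wts Wb) size_map.
rewrite map_cat; have -> : map fst (zip (newvars e P) b) = newvars e P by exact: unzip1_zip.
move=> y; rewrite !mem_cat => /orP[-> // | Hy].
by case Ey: (y \in map fst e) => //=; rewrite mem_undup mem_filter Ey Hy.
Qed.

Lemma meq_size L M : meq D L M -> size L = size M.
Proof. by elim=> //= x L' G1 G2 y _ _ ->; rewrite !size_cat /= addnS. Qed.

Lemma matches_size_lt G e P H b : pq P <> [::] -> matches D G e P H b ->
  size (rest H e P b) < size G.
Proof.
move=> HP [_ _ /meq_size ->]; rewrite !size_cat !size_map size_cat ltn_add2l.
by rewrite -[X in X < _]addn0 ltn_add2l; case: (pq P) HP.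
Qed.

Definition wf_cframe (fr : cframe S) : Prop :=
  match fr with
  | Res B => good_bool B
  | NotF => True
  | Ev e c | EvD e c => [/\ wf_env e, closedC (map fst e) c & wfC c]
  | ExF _ e P c => [/\ wf_env e, closedC (map fst e ++ patvars P) c, wfC c & wfP P]
  end.

Lemma cstep_wf s s' : cstep D F s s' -> all_prop wf_cframe s -> all_prop wf_cframe s'.
Proof.
case=> /=.
- by move=> e St [_ HSt]; split => //; apply: good_false.
- by move=> e B St [[He HB WB] HSt]; split => //; split; [apply: ground_substL | apply: wt_substL].
- by move=> e c St [[He Hc Wc] HSt].
- by move=> B St [HB [_ HSt]]; split => //; apply: good_not.
- by move=> e c1 c2 St [[He [Hc1 Hc2] [Wc1 Wc2]] HSt].
- by move=> B e c St _ [_ [_ HSt]]; split => //; apply: good_true.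
- by move=> B e c St _ [_ [Hfr HSt]].
- by move=> e P c St [[He Hc [WP Wc]] HSt].
- move=> G e P c St H b Hm [[He Hc Wc WP] HSt]; have [He' sub] := matches_ext He Hm.
  by split => //; split => //; apply: closedC_sub sub Hc.
- by move=> B G e P c St _ [_ HSt].
- by move=> B G e P c St _ [_ [_ HSt]]; split => //; apply: good_true.
- by move=> G e P c St _ [_ HSt]; split => //; apply: good_false.
Qed.

Lemma crun_good e c B : wf_env e -> closedC (map fst e) c -> wfC c ->
  crun [:: Ev e c] B -> good_bool B.
Proof.
move=> He Hc Wc H; suff: all_prop wf_cframe [:: Res B] by case.
have: all_prop wf_cframe [:: Ev e c] by [].
by elim: H => // x y z Hxy _ IH /(cstep_wf Hxy).
Qed.

Lemma crun_ExF_exists e P c : pq P <> [::] ->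
  (forall G H b, matches D G e P H b -> exists2 B, crun [:: Ev (ext e P b) c] B & good_bool B) ->
  forall G, exists B, crun [:: ExF G e P c] B.
Proof.
move=> HP Hbody G; move: (ltnSn (size G)); move: {2}(size G).+1 => n.
elim: n G => // n IHn G HG.
case: (classic (exists H b, matches D G e P H b)) => [[H [b Hm]] | Hnm]; last first.
  by exists bF; apply: crun_ExF_none => H b Hm; apply: Hnm; exists H, b.
have [B1 H1 G1] := Hbody _ _ _ Hm.
case: (bool_dichotomy G1) => [T1 | F1]; first by exists bT; apply: crun_ExF_true Hm H1 T1.
have [B HB] := IHn _ (leq_trans (matches_size_lt HP Hm) HG).
by exists B; apply: crun_ExF_false Hm H1 F1 HB.
Qed.

Lemma crun_exists e c : wf_env e -> closedC (map fst e) c -> wfC c ->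
  exists B, crun [:: Ev e c] B.
Proof.
elim: c e => [|B0|c IH|c1 IH1 c2 IH2|P c IH] e He /=.
- by exists bF; apply/crun_Ev/crun_Res.
- by exists (substL e B0); apply/crun_Ev/crun_Res.
- by move=> Hc Wc; have [B1 H1] := IH e He Hc Wc; exists (notB B1); apply/crun_not; exists B1.
- move=> [Hc1 Hc2] [Wc1 Wc2]; have [B2 H2] := IH2 e He Hc2 Wc2.
  case: (bool_dichotomy (crun_good He Hc2 Wc2 H2)) => [T2 | F2].
    by exists bT; apply: crun_or_true H2 T2.
  by have [B1 H1] := IH1 e He Hc1 Wc1; exists B1; apply: crun_or_false H2 F2 H1.
- move=> Hc [[HP _] Wc].
  have Hbody G H b : matches D G e P H b ->
      exists2 B, crun [:: Ev (ext e P b) c] B & good_bool B.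
    case/(matches_ext He) => He' /closedC_sub/(_ Hc) Hc'.
    by have [B HB] := IH _ He' Hc' Wc; exists B => //; apply: crun_good HB.
  by have [B HB] := crun_ExF_exists HP Hbody F; exists B; apply/crun_Ev.
Qed.

Lemma memD_cat t L M : memD D t (L ++ M) <-> memD D t L \/ memD D t M.
Proof. by elim: L => /= [|u L ->]; tauto. Qed.

Lemma meq_refl L : meq D L L.
Proof. by elim: L => [|u L IH]; [apply: meq_nil | apply: (@meq_cons _ _ u L [::] L u)]. Qed.

Lemma memD_meq t L : memD D t L -> exists L', meq D L (L' ++ [:: t]).
Proof.
elim: L => //= u L IH [Htu | /IH [L' HL']].
  by exists L; apply: (@meq_cons _ _ u L L [::] t); [apply: D_sym | rewrite cats0; apply: meq_refl].
by exists (u :: L'); apply: (@meq_cons _ _ u L [::] (L' ++ [:: t]) u).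
Qed.

Lemma meq_memD t L M : meq D L M -> (memD D t L <-> memD D t M).
Proof.
elim=> //= u L' G1 G2 y Huy _ IH; rewrite !memD_cat /= IH memD_cat.
have : D t u <-> D t y by split=> Ht; [apply: D_trans Ht Huy | apply: D_trans Ht (D_sym Huy)].
tauto.
Qed.

Variable rt : term S.
Hypotheses (rt_ground : ground rt) (rt_wt : wt rt (sFact S)).

Definition verdict B Out := (D B bT /\ memD D rt Out) \/ (D B bF /\ ~ memD D rt Out).

Lemma verdict_bool B Out : verdict B Out -> D B bT \/ D B bF.
Proof. by case=> [[TB _] | [FB _]]; [left | right]. Qed.

Lemma verdict_mem B Out : verdict B Out -> D B bT -> memD D rt Out.
Proof. by case=> [[] // | [FB _] TB]; case: (true_false_contra TB FB). Qed.

Lemma verdict_notmem B Out : verdict B Out -> D B bF -> ~ memD D rt Out.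
Proof. by case=> [[TB _] FB | [] //]; case: (true_false_contra TB FB). Qed.

Lemma verdict_true_catl B O1 O2 : verdict B O1 -> D B bT -> verdict bT (O1 ++ O2).
Proof. by move=> HB /(verdict_mem HB) M; left; split => //; apply/memD_cat; left. Qed.

Lemma verdict_true_catr B O1 O2 : verdict B O2 -> D B bT -> verdict bT (O1 ++ O2).
Proof. by move=> HB /(verdict_mem HB) M; left; split => //; apply/memD_cat; right. Qed.

Lemma verdict_false_catl B1 B O1 O2 : verdict B1 O1 -> D B1 bF ->
  verdict B O2 -> verdict B (O1 ++ O2).
Proof.
move=> HB1 /(verdict_notmem HB1) M1.
by case=> [[TB M] | [FB M]]; [left | right]; split; rewrite ?memD_cat; tauto.
Qed.

Lemma verdict_false_catr B2 B O1 O2 : verdict B2 O2 -> D B2 bF ->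
  verdict B O1 -> verdict B (O1 ++ O2).
Proof.
move=> HB2 /(verdict_notmem HB2) M2.
by case=> [[TB M] | [FB M]]; [left | right]; split; rewrite ?memD_cat; tauto.
Qed.

Lemma verdict_false_nil : verdict bF [::].
Proof. by right; split => //; apply: D_refl. Qed.

Lemma verdict_not_true_nil : verdict (notB bT) [::].
Proof. by right; split => //; apply/(not_false good_true). Qed.

Lemma verdict_not_not B Out : good_bool B -> verdict B Out -> verdict (notB (notB B)) Out.
Proof.
move=> GB; have Gn := good_not GB.
case=> [[TB M] | [FB M]]; [left | right]; split => //.
  by apply/(not_true Gn)/(not_false GB).
by apply/(not_false Gn)/(not_true GB).
Qed.

Lemma verdict_fact u : ground u -> wt u (sFact S) ->
  verdict (TApp (fEq (sFact S)) [:: u; rt]) [:: u].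
Proof.
move=> Gu Wu; have [|T_eq|F_eq] := @bool_dichotomy (TApp (fEq (sFact S)) [:: u; rt]).
  split; first exact: ground_TApp.
  apply: wt_app; last by rewrite (eq_rank _).2.
  by rewrite (eq_rank _).1; do 2 apply: wts_cons => //; apply: wts_nil.
- by left; split => //; left; apply/D_sym/(eq_true Gu rt_ground Wu rt_wt).
- right; split => // [[/D_sym /(eq_true Gu rt_ground Wu rt_wt) T_eq |//]].
  exact: true_false_contra T_eq F_eq.
Qed.

(* Runs are related in both directions since matching is nondeterministic;
   existence of query runs is needed where a condition short-circuits. *)
Definition simulates qs cs :=
  [/\ forall Out, qrun qs Out -> exists2 B, crun cs B & verdict B Out,
      forall B, crun cs B -> exists2 Out, qrun qs Out & verdict B Out &
      exists Out, qrun qs Out].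

Lemma simulates_empty e : simulates [:: QEv e (QEmpty S)] [:: Ev e (CFalse S)].
Proof.
split=> [Out /qrun_empty -> | B /crun_Ev/crun_Res <- |].
- by exists bF; [apply/crun_Ev/crun_Res | apply: verdict_false_nil].
- by exists [::]; [apply/qrun_empty | apply: verdict_false_nil].
- by exists [::]; apply/qrun_empty.
Qed.

Lemma simulates_fact e f : wf_env e -> {subset tvars f <= map fst e} -> wt f (sFact S) ->
  simulates [:: QEv e (QFact f)] [:: Ev e (CB (TApp (fEq (sFact S)) [:: f; rt]))].
Proof.
move=> He Hf Wf.
have Hv : verdict (substL e (TApp (fEq (sFact S)) [:: f; rt])) [:: substL e f].
  rewrite {1}/substL substF_app /= (substF_ground _ rt_ground).
  exact: verdict_fact (ground_substL He Hf) (wt_substL leS_refl leS_trans He Wf).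
split=> [Out /qrun_fact -> | B /crun_Ev/crun_Res <- |].
- by eexists; [apply/crun_Ev/crun_Res | exact: Hv].
- by eexists; [apply/qrun_fact | exact: Hv].
- by eexists; apply/qrun_fact.
Qed.

Lemma simulates_plus e q1 q2 c1 c2 :
  simulates [:: QEv e q1] [:: Ev e c1] -> simulates [:: QEv e q2] [:: Ev e c2] ->
  simulates [:: QEv e (QPlus q1 q2)] [:: Ev e (COr c1 c2)].
Proof.
case=> [sound1 compl1 [O1' run1]] [sound2 compl2 [O2' run2]]; split.
- move=> _ /qrun_plus [O1 [O2 [-> /sound1 [B1 H1 V1] /sound2 [B2 H2 V2]]]].
  case: (verdict_bool V2) => [T2 | F2].
    by exists bT; [apply: crun_or_true H2 T2 | apply: verdict_true_catr V2 T2].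
  by exists B1; [apply: crun_or_false H2 F2 H1 | apply: verdict_false_catr V2 F2 V1].
- move=> B /crun_or_inv [B2 /compl2 [O2 H2 V2] [[T2 ->] | [F2 /compl1 [O1 H1 V1]]]].
    exists (O1' ++ O2); last exact: verdict_true_catr V2 T2.
    by apply/qrun_plus; exists O1', O2.
  exists (O1 ++ O2); last exact: verdict_false_catr V2 F2 V1.
  by apply/qrun_plus; exists O1, O2.
- by exists (O1' ++ O2'); apply/qrun_plus; exists O1', O2'.
Qed.

Lemma simulates_imp e c q cq :
  (forall B, crun [:: Ev e c] B -> good_bool B) -> (exists B, crun [:: Ev e c] B) ->
  (forall B, crun [:: Ev e cq] B -> good_bool B) ->
  simulates [:: QEv e q] [:: Ev e cq] ->
  simulates [:: QEv e (QImp c q)] [:: Ev e (cand c cq)].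
Proof.
move=> c_good [Bc run_c] cq_good [sound compl [Oq run_q]]; split.
- move=> Out /qrun_imp_inv [B1 H1 [[F1 ->] | [T1 /sound [B2 H2 V2]]]].
    exists (notB bT); last exact: verdict_not_true_nil.
    exact: crun_and_false H1 ((not_true (c_good _ H1)).2 F1).
  exists (notB (notB B2)); last exact: verdict_not_not (cq_good _ H2) V2.
  exact: crun_and_true H1 ((not_false (c_good _ H1)).2 T1) H2.
- move=> B /crun_and_inv [B1 H1 [[T1 ->] | [F1 [B2 H2 ->]]]].
    exists [::]; last exact: verdict_not_true_nil.
    exact: qrun_imp_false H1 ((not_true (c_good _ H1)).1 T1).
  have [Out Hq V2] := compl _ H2.
  exists Out; last exact: verdict_not_not (cq_good _ H2) V2.
  exact: qrun_imp_true H1 ((not_false (c_good _ H1)).1 F1) Hq.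
- case: (bool_dichotomy (c_good _ run_c)) => [Tc | Fc].
    by exists Oq; apply: qrun_imp_true run_c Tc run_q.
  by exists [::]; apply: qrun_imp_false run_c Fc.
Qed.

Lemma simulates_QFr e P q c : pq P <> [::] ->
  (forall G H b, matches D G e P H b ->
     simulates [:: QEv (ext e P b) q] [:: Ev (ext e P b) c]) ->
  forall G, simulates [:: QFr G e P q] [:: ExF G e P c].
Proof.
move=> HP Hbody G; move: (ltnSn (size G)); move: {2}(size G).+1 => n.
elim: n G => // n IHn G HG.
have IHrest H b : matches D G e P H b ->
    simulates [:: QFr (rest H e P b) e P q] [:: ExF (rest H e P b) e P c].
  by move=> Hm; apply: IHn; apply: leq_trans (matches_size_lt HP Hm) HG.
split.
- move=> Out /qrun_QFr_inv [[H [b [Hm [O1 [O2 [-> H1 H2]]]]]] | [Hnm ->]]; last first.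
    by exists bF; [apply: crun_ExF_none | apply: verdict_false_nil].
  have [sound1 _ _] := Hbody _ _ _ Hm; have [sound2 _ _] := IHrest _ _ Hm.
  have [B1 C1 V1] := sound1 _ H1; have [B2 C2 V2] := sound2 _ H2.
  case: (verdict_bool V1) => [T1 | F1].
    by exists bT; [apply: crun_ExF_true Hm C1 T1 | apply: verdict_true_catl V1 T1].
  by exists B2; [apply: crun_ExF_false Hm C1 F1 C2 | apply: verdict_false_catl V1 F1 V2].
- move=> B /crun_ExF_inv [[H [b [Hm [B1 C1 HB]]]] | [Hnm ->]]; last first.
    by exists [::]; [apply: qrun_QFr_none | apply: verdict_false_nil].
  have [_ compl1 _] := Hbody _ _ _ Hm; have [_ compl2 [O2' H2']] := IHrest _ _ Hm.
  have [O1 H1 V1] := compl1 _ C1.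
  case: HB => [[T1 ->] | [F1 /compl2 [O2 H2 V2]]].
    by exists (O1 ++ O2'); [apply: qrun_QFr_match Hm H1 H2' | apply: verdict_true_catl V1 T1].
  by exists (O1 ++ O2); [apply: qrun_QFr_match Hm H1 H2 | apply: verdict_false_catl V1 F1 V2].
- case: (classic (exists H b, matches D G e P H b)) => [[H [b Hm]] | Hnm]; last first.
    by exists [::]; apply: qrun_QFr_none => H b Hm; apply: Hnm; exists H, b.
  have [_ _ [O1 H1]] := Hbody _ _ _ Hm; have [_ _ [O2 H2]] := IHrest _ _ Hm.
  by exists (O1 ++ O2); apply: qrun_QFr_match Hm H1 H2.
Qed.

Lemma simulates_mem_cond q e : wf_env e -> closedQ (map fst e) q -> wfQ q ->
  simulates [:: QEv e q] [:: Ev e (mem_cond rt q)].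
Proof.
elim: q e => [|f|q1 IH1 q2 IH2|c q IH|P q IH] e He /=.
- by move=> _ _; apply: simulates_empty.
- exact: simulates_fact.
- by case=> Hc1 Hc2 [W1 W2]; apply: simulates_plus; [apply: IH1 | apply: IH2].
- case=> Hcc Hcq [Wc Wq]; apply: simulates_imp (IH e He Hcq Wq).
  + by move=> B; apply: crun_good.
  + exact: crun_exists.
  + move=> B; apply: crun_good He (closedC_mem_cond rt_ground Hcq) _.
    exact: wfC_mem_cond leS_refl (eq_rank _).1 (eq_rank _).2 rt_wt Wq.
- move=> Hc [[HP _] Wq].
  have Hbody G H b : matches D G e P H b ->
      simulates [:: QEv (ext e P b) q] [:: Ev (ext e P b) (mem_cond rt q)].
    by case/(matches_ext He) => He' /closedQ_sub/(_ Hc) Hc'; apply: IH.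
  have [sound compl [Out HOut]] := simulates_QFr HP Hbody F.
  split=> [Out' /qrun_from /sound [B HB V] | B /crun_Ev /compl [Out' H' V] |].
  + by exists B => //; apply/crun_Ev.
  + by exists Out' => //; apply/qrun_from.
  + by exists Out; apply/qrun_from.
Qed.

Theorem mem_cond_answers q : wfQ q -> closedQ [::] q ->
  ((exists B, reach_nf (cstepS D) (initC F (mem_cond rt q)) (Sat B) /\ D B bT) <->
   (exists F' Out, reach_nf (qstepS D) (initQ F q) (Ans Out) /\ meq D Out (F' ++ [:: rt]))) /\
  ((exists B, reach_nf (cstepS D) (initC F (mem_cond rt q)) (Sat B) /\ D B bF) <->
   (exists F' Out, ~ memD D rt F' /\ reach_nf (qstepS D) (initQ F q) (Ans Out) /\ meq D Out F')).
Proof.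
move=> Wq Cq; have [sound compl _] := simulates_mem_cond (e := [::]) I Cq Wq.
split; split.
- case=> B [/reach_Sat_crun /compl [Out HOut V] TB].
  have [F' HF'] := memD_meq (verdict_mem V TB).
  by exists F', Out; split => //; apply/reach_Ans_qrun.
- case=> F' [Out [/reach_Ans_qrun /sound [B HB V] HM]].
  exists B; split; first exact/reach_Sat_crun.
  case: (verdict_bool V) => // FB; case: (verdict_notmem V FB).
  by apply/(meq_memD _ HM)/memD_cat; right; left; apply: D_refl.
- case=> B [/reach_Sat_crun /compl [Out HOut V] FB].
  exists Out, Out; split; first exact: verdict_notmem V FB.
  by split; [apply/reach_Ans_qrun | apply: meq_refl].
- case=> F' [Out [NM [/reach_Ans_qrun /sound [B HB V] HM]]].
  exists B; split; first exact/reach_Sat_crun.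
  by case: (verdict_bool V) => // TB; case: NM; apply/(meq_memD _ HM)/(verdict_mem V TB).
Qed.

End Simulation.
Theorem lemma13 (S : sig) (D A : term S -> term S -> Prop) (nf : term S -> term S)
  (HD : fact_algebra D A nf)
  (r : opsym S) (Q : query S) (x : seq (var S))
  (Hr : fcod r = sFact S)
  (Hx : uniq x) (Hxs : map (@vsort S) x = fdom r)
  (HQ : wfQ Q)
  (Hdisj : forall y, y \in x -> y \notin qvars Q) :
  exists phi : cond S,
    (forall (F : seq (term S)) (t a : seq (term S)) (v : seq (var S)),
       foldr (fun f P => ground f /\ wt f (sFact S) /\ P) True F ->
       uniq (x ++ v) ->
       gr_list t -> wts t (fdom r) ->
       gr_list a -> wts a (map (@vsort S) v) ->
       closedQ [::] (substQ (zip v a) Q) ->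
       closedC [::] (substC (zip x t ++ zip v a) phi) /\
       ((exists B, reach_nf (cstepS D) (initC F (substC (zip x t ++ zip v a) phi)) (Sat B)
                   /\ D B (bTrue S)) <->
        (exists F' Ans', reach_nf (qstepS D) (initQ F (substQ (zip v a) Q)) (Ans Ans')
                   /\ meq D Ans' (F' ++ [:: TApp r t]))) /\
       ((exists B, reach_nf (cstepS D) (initC F (substC (zip x t ++ zip v a) phi)) (Sat B)
                   /\ D B (bFalse S)) <->
        (exists F' Ans', ~ memD D (TApp r t) F'
                   /\ reach_nf (qstepS D) (initQ F (substQ (zip v a) Q)) (Ans Ans')
                   /\ meq D Ans' F')))
    /\ (detQ A nf Q -> detC A nf phi).
Proof.
have [[leS_refl [leS_trans _]] _ _ _ _] := HD.
exists (mem_cond (TApp r (map (@TVar S) x)) Q); split; last exact: detC_mem_cond.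
move=> F t a v _ _ Gt Wt Ga Wa CQ.
have size_t : size x = size t by rewrite (size_wts Wt) -Hxs size_map.
have x_fresh : {in qvars Q, forall y, y \notin x} by move=> y Hy; apply: contraL Hy; apply: Hdisj.
rewrite substC_mem_cond //.
have Grt : ground (TApp r t) by apply: ground_TApp.
have Wrt : wt (TApp r t) (sFact S) by apply: wt_app Wt _; rewrite Hr; apply: leS_refl.
have WQ : wfQ (substQ (zip v a) Q) by apply: wfQ_substQ (wf_env_zip Ga Wa) HQ.
split; first exact: closedC_mem_cond.
exact: (mem_cond_answers HD F Grt Wrt WQ CQ).
Qed.
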